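(* Let $\Sigma$ be an oriented graph on $n$ vertices with skew adjacency matrix $S$ and walk-matrix $W=W(\Sigma)$ satisfying $\det W\neq0$, and let $P$ be a permutation matrix with $P^{\mathrm T}SP=S^{\mathrm T}=-S$. If $n$ is even, then $\mathrm{rank}(I-P)=\mathrm{rank}(I+P)=n/2$; if $n$ is odd, then $\mathrm{rank}(I-P)=(n-1)/2$ and $\mathrm{rank}(I+P)=(n+1)/2$, where ranks are over $\mathbb{Q}$. The same equalities hold for ranks over $\mathbb{F}_p$ for every odd prime $p$.
   Context: The skew adjacency matrix $S=(S_{ij})$ of an oriented graph on vertices $v_1,\dots,v_n$ has $S_{ij}=1$ if $(v_i,v_j)$ is a directed edge, $S_{ij}=-1$ if $(v_j,v_i)$ is a directed edge, and $S_{ij}=0$ otherwise. The walk-matrix is $W(\Sigma)=[e,Se,\ldots,S^{n-1}e]$ with $e$ the all-ones vector. *)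

From HB Require Import structures.
From mathcomp Require Import all_boot all_order all_algebra all_fingroup.
Set Implicit Arguments. Unset Strict Implicit. Unset Printing Implicit Defensive.
Import GRing.Theory Num.Theory.
Local Open Scope ring_scope.

(* An oriented graph on vertices 'I_n: a relation e with no pair of opposite arcs
   (in particular no loops); e i j means (v_i, v_j) is a directed edge. *)
Definition oriented_graph (n : nat) (e : rel 'I_n) : Prop :=
  forall i j, e i j -> ~~ e j i.

Definition skew_adj (n : nat) (e : rel 'I_n) : 'M[int]_n :=
  \matrix_(i, j) ((e i j)%:Z - (e j i)%:Z).

(* Walk matrix W = [e, S e, ..., S^(n-1) e]: column j is S^j times the all-ones vector. *)
Definition walk_mx (R : pzRingType) (n : nat) (S : 'M[R]_n) : 'M[R]_n :=
  \matrix_(i, j) ((S ^+ j) *m (const_mx 1 : 'cV[R]_n)) i 0.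

From HB Require Import structures.
From mathcomp Require Import all_boot all_order all_algebra all_fingroup.
From mathcomp Require Import zify.
Set Implicit Arguments.
Unset Strict Implicit.
Unset Printing Implicit Defensive.

Import GRing.Theory Num.Theory.
Local Open Scope ring_scope.

(* Since P^T S P = -S and P fixes the all-ones vector e, P^T S^k e = (-1)^k S^k e,
   i.e. P^T W = W D with D = diag(1, -1, 1, ...).  Over Q the walk matrix W is
   invertible, so P^T is similar to D: this gives P^2 = 1 and the ranks n/2
   (rounded down) of 1 - P and n/2 (rounded up) of 1 + P.  Modulo an odd prime p
   W may become singular, but ranks of integer matrices can only drop mod p,
   while P^2 = 1 and 2 != 0 force rank(1 - P) + rank(1 + P) = n. *)

Definition alt_sign_mx (R : pzRingType) (n : nat) : 'M[R]_n :=
  diag_mx (\row_(j < n) (-1) ^+ j).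

Lemma alt_sign_mxK (R : pzRingType) n :
  alt_sign_mx R n *m alt_sign_mx R n = 1%:M.
Proof.
rewrite mulmx_diag; apply/matrixP => i j; rewrite !mxE -exprD -signr_odd.
by rewrite oddD addbb expr0.
Qed.

Lemma col_walk_mx (R : pzRingType) n (S : 'M[R]_n) j :
  col j (walk_mx S) = S ^+ j *m const_mx 1.
Proof. by apply/matrixP => i k; rewrite !mxE ord1. Qed.

Lemma perm_mx_const (R : pzRingType) n (s : 'S_n) (a : R) :
  perm_mx s *m (const_mx a : 'cV_n) = const_mx a.
Proof. by rewrite -row_permE; apply/matrixP => i j; rewrite !mxE. Qed.

Section AntiSymmetry.

Variables (R : comNzRingType) (n : nat) (S : 'M[R]_n) (s : 'S_n).
Hypothesis antiS : (perm_mx s)^T *m S *m perm_mx s = - S.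

Lemma trperm_mx_mulNr : (perm_mx s)^T *m S = - (S *m (perm_mx s)^T).
Proof.
have PPt : perm_mx s *m (perm_mx s)^T = 1%:M :> 'M[R]_n.
  by rewrite tr_perm_mx -perm_mxM mulgV perm_mx1.
by rewrite -[_ *m S]mulmx1 -PPt !mulmxA antiS mulNmx.
Qed.

Lemma trperm_mx_mulXr k :
  (perm_mx s)^T *m S ^+ k = (-1) ^+ k *: (S ^+ k *m (perm_mx s)^T).
Proof.
elim: k => [|k IHk]; first by rewrite !expr0 scale1r mulmx1 mul1mx.
rewrite exprSr -mulmxE mulmxA IHk -scalemxAl -mulmxA trperm_mx_mulNr.
by rewrite mulmxN exprSr mulrN1 scaleNr -mulmxA scalerN.
Qed.

Lemma trperm_mx_walk_mx :
  (perm_mx s)^T *m walk_mx S = walk_mx S *m alt_sign_mx R n.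
Proof.
rewrite mul_mx_diag; apply/matrixP => i j.
have entry_col (A : 'M[R]_n) : A i j = col j A i 0 by rewrite !mxE.
rewrite entry_col colE -mulmxA -colE col_walk_mx mulmxA trperm_mx_mulXr.
by rewrite -scalemxAl -mulmxA tr_perm_mx perm_mx_const -col_walk_mx !mxE mulrC.
Qed.

End AntiSymmetry.

Lemma perm_mx_eq1 (R : nzRingType) n (s : 'S_n) :
  perm_mx s = 1%:M :> 'M[R]_n -> s = 1%g.
Proof.
move=> /matrixP s1; apply/permP => i; have := s1 i (s i).
rewrite !mxE eqxx perm1; case: eqP => // _ /eqP.
by rewrite oner_eq0.
Qed.

Lemma mxrank_diag (F : fieldType) n (d : 'rV[F]_n) :
  \rank (diag_mx d) = (\sum_(j < n) (d ord0 j != 0%R))%N.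
Proof.
elim: n d => [|n IHn] d; first by rewrite big_ord0 flatmx0 mxrank0.
have -> : \rank (diag_mx d) = \rank (block_mx (diag_mx (lsubmx (d : 'rV_(1 + n))))
                               0 0 (diag_mx (rsubmx (d : 'rV_(1 + n))))).
  by rewrite -diag_mx_row hsubmxK.
rewrite rank_diag_block_mx IHn big_ord_recl.
have rsub_lift j : rsubmx (d : 'rV_(1 + n)) ord0 j = d ord0 (lift ord0 j).
  by rewrite mxE; congr (d _ _); apply: val_inj.
have -> : lsubmx (d : 'rV_(1 + n)) = const_mx (d ord0 ord0).
  by apply/matrixP => i j; rewrite !ord1 !mxE; congr (d _ _); apply: val_inj.
rewrite diag_const_mx; congr (_ + _)%N; last by apply: eq_bigr => j _; rewrite rsub_lift.
have [->|nz_d0] := eqVneq (d ord0 ord0) 0; first by rewrite raddf0 mxrank0.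
by rewrite mxrank_unit // unitmxE det_scalar1 unitfE.
Qed.

Lemma sum_odd_ord n : (\sum_(j < n) odd j)%N = n./2.
Proof.
elim: n => [|n IHn]; first by rewrite big_ord0.
by rewrite big_ord_recr /= IHn uphalf_half addnC.
Qed.

Lemma sum_even_ord n : (\sum_(j < n) ~~ odd j)%N = uphalf n.
Proof.
elim: n => [|n IHn]; first by rewrite big_ord0.
by rewrite big_ord_recr /= IHn uphalf_half; case: (odd n); rewrite ?addn0 ?addn1.
Qed.

Section AltSignRank.

Variables (F : fieldType) (n : nat).
Hypothesis two_neq0 : (2%:R : F) != 0.

Lemma mxrank_1_sub_alt_sign : \rank (1%:M - alt_sign_mx F n) = n./2.
Proof.
rewrite /alt_sign_mx -diag_const_mx -raddfB mxrank_diag -sum_odd_ord.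
apply: eq_bigr => j _; rewrite !mxE -signr_odd.
by case: (odd j); rewrite ?expr0 ?subrr ?eqxx // expr1 opprK -mulr2n two_neq0.
Qed.

Lemma mxrank_1_add_alt_sign : \rank (1%:M + alt_sign_mx F n)%R = uphalf n.
Proof.
rewrite /alt_sign_mx -diag_const_mx -raddfD mxrank_diag -sum_even_ord.
apply: eq_bigr => j _; rewrite !mxE -signr_odd.
by case: (odd j); rewrite ?expr1 ?subrr ?eqxx // expr0 -mulr2n two_neq0.
Qed.

End AltSignRank.

Lemma mxrank_conj (F : fieldType) n (W A : 'M[F]_n) :
  W \in unitmx -> \rank (W *m A *m invmx W) = \rank A.
Proof.
move=> W_unit.
by rewrite mxrankMfree ?row_free_unit ?unitmx_inv // eqmxMfull ?row_full_unit.
Qed.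

Section WalkInvertible.

Variables (F : fieldType) (n : nat) (S : 'M[F]_n) (s : 'S_n).
Hypothesis antiS : (perm_mx s)^T *m S *m perm_mx s = - S.
Hypothesis walk_unit : walk_mx S \in unitmx.

Local Notation W := (walk_mx S).
Local Notation D := (alt_sign_mx F n).

Lemma trperm_mx_similar : (perm_mx s)^T = W *m D *m invmx W.
Proof. by rewrite -(trperm_mx_walk_mx antiS) mulmxK. Qed.

Lemma perm_involutive : (s * s = 1)%g.
Proof.
apply: (@perm_mx_eq1 F); apply: trmx_inj.
rewrite perm_mxM trmx_mul trperm_mx_similar trmx1 !mulmxA mulmxKV //.
by rewrite -(mulmxA W) alt_sign_mxK mulmx1 mulmxV.
Qed.

Hypothesis two_neq0 : (2%:R : F) != 0.

Lemma mxrank_1_sub_perm_mx : \rank (1%:M - perm_mx s : 'M[F]_n) = n./2.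
Proof.
rewrite -mxrank_tr raddfB /= trmx1 trperm_mx_similar.
have -> : 1%:M - W *m D *m invmx W = W *m (1%:M - D) *m invmx W.
  by rewrite mulmxBr mulmxBl mulmx1 mulmxV.
by rewrite mxrank_conj // mxrank_1_sub_alt_sign.
Qed.

Lemma mxrank_1_add_perm_mx : \rank (1%:M + perm_mx s : 'M[F]_n)%R = uphalf n.
Proof.
rewrite -mxrank_tr raddfD /= trmx1 trperm_mx_similar.
have -> : 1%:M + W *m D *m invmx W = W *m (1%:M + D) *m invmx W.
  by rewrite mulmxDr mulmxDl mulmx1 mulmxV.
by rewrite mxrank_conj // mxrank_1_add_alt_sign.
Qed.

End WalkInvertible.

Lemma mxrank_sub_add_involution (F : fieldType) n (P : 'M[F]_n) :
  P *m P = 1%:M -> (2%:R : F) != 0 ->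
  (\rank (1%:M - P)%R + \rank (1%:M + P)%R)%N = n.
Proof.
move=> PP two_neq0; apply/eqP; rewrite eqn_leq; apply/andP; split.
  have := mxrank_mul_min (1%:M - P) (1%:M + P).
  rewrite mulmxBl !mulmxDr !mul1mx mulmx1 PP [P + _]addrC subrr mxrank0.
  by rewrite leqn0 subn_eq0.
have := mxrank_add (1%:M - P) (1%:M + P).
rewrite addrCA subrK -scalemx1 -scalerDl scalemx1 mxrank_unit //.
by rewrite unitmxE det_scalar unitfE expf_neq0.
Qed.

(* A nonsingular maximal minor of A over F is the image of a minor over R whose
   image in K is still nonsingular, as g is injective. *)
Lemma mxrank_map_mx_le (R : comNzRingType) (F K : fieldType)
    (f : {rmorphism R -> F}) (g : {rmorphism R -> K}) m n (A : 'M[R]_(m, n)) :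
  injective g -> (\rank (map_mx f A) <= \rank (map_mx g A))%N.
Proof.
move=> g_inj; set AF := map_mx f A; set AK := map_mx g A.
have AF_free := maxrowsub_free AF; set r := maxrankfun AF in AF_free.
have AFt_full : row_full (rowsub r AF)^T by rewrite /row_full mxrank_tr.
have := fullrowsub_unit AFt_full; set c := fullrankfun AFt_full.
set B : 'M[R]_(\rank AF) := rowsub c (rowsub r A)^T.
have -> : rowsub c (rowsub r AF)^T = map_mx f B by apply/matrixP => i j; rewrite !mxE.
rewrite unitmxE det_map_mx unitfE => detB_neq0.
have BK_unit : rowsub c (rowsub r AK)^T \in unitmx.
  have -> : rowsub c (rowsub r AK)^T = map_mx g B by apply/matrixP => i j; rewrite !mxE.
  rewrite unitmxE det_map_mx unitfE; apply: contra detB_neq0 => /eqP.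
  by rewrite -(rmorph0 g) => /g_inj ->; rewrite rmorph0.
rewrite -(mxrank_unit BK_unit) rowsubE.
by apply: leq_trans (mxrankM_maxr _ _) _; rewrite mxrank_tr rowsubE mxrankM_maxr.
Qed.

Lemma map_walk_mx (aR rR : comNzRingType) (f : {rmorphism aR -> rR}) n
    (S : 'M[aR]_n) :
  walk_mx (map_mx f S) = map_mx f (walk_mx S).
Proof.
have map_exp k : map_mx f (S ^+ k) = map_mx f S ^+ k.
  elim: k => [|k IHk]; first by rewrite !expr0 map_mx1.
  by rewrite !exprSr -!mulmxE map_mxM IHk.
apply/matrixP => i j; rewrite !mxE -map_exp rmorph_sum.
by apply: eq_bigr => k _; rewrite rmorphM !mxE rmorph1.
Qed.

Lemma Fp_two_neq0 p : prime p -> odd p -> (2%:R : 'F_p) != 0.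
Proof.
move=> p_pr p_odd; rewrite -(dvdn_pcharf (pchar_Fp p_pr)).
by apply: contraL p_odd => /(dvdn_leq (isT : 0 < 2)%N); case: p p_pr => [|[|[|]]].
Qed.

Lemma mxrank_perm_mx_transfer (F K : fieldType) n (s : 'S_n) :
  (s * s = 1)%g -> (2%:R : F) != 0 -> injective (intr : int -> K) ->
  \rank (1%:M - perm_mx s : 'M[K]_n) = n./2 ->
  \rank (1%:M + perm_mx s : 'M[K]_n)%R = uphalf n ->
  \rank (1%:M - perm_mx s : 'M[F]_n) = n./2 /\
  \rank (1%:M + perm_mx s : 'M[F]_n)%R = uphalf n.
Proof.
move=> ss two_neq0 intrK_inj rkK_sub rkK_add.
have PP : perm_mx s *m perm_mx s = 1%:M :> 'M[F]_n by rewrite -perm_mxM ss perm_mx1.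
have rk_sum := mxrank_sub_add_involution PP two_neq0.
have le_sub := @mxrank_map_mx_le _ F K intr intr _ _ (1%:M - perm_mx s) intrK_inj.
have le_add := @mxrank_map_mx_le _ F K intr intr _ _ (1%:M + perm_mx s) intrK_inj.
rewrite !(map_mxB, map_mxD, map_mx1, map_perm_mx) rkK_sub rkK_add in le_sub le_add.
have squeeze (a b c d : nat) :
  (a <= c -> b <= d -> a + b = c + d -> a = c /\ b = d)%N.
  by lia.
apply: squeeze le_sub le_add _.
by rewrite rk_sum uphalf_half addnCA addnn odd_double_half.
Qed.

Lemma half_uphalf_parity n (a b : nat) : a = n./2 -> b = uphalf n ->
  (~~ odd n -> a = n./2 /\ b = n./2) /\
  (odd n -> a = (n - 1)./2 /\ b = (n + 1)./2).
Proof.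
move=> -> ->; rewrite uphalf_half; split=> [/negbTE -> //|n_odd].
rewrite n_odd addn1 /= uphalf_half n_odd; split=> //.
by rewrite -[n in (n - 1)%N]odd_double_half n_odd addKn doubleK.
Qed.

Theorem lemma2p11 (n : nat) (e : rel 'I_n) (s : 'S_n) :
  oriented_graph e ->
  \det (walk_mx (skew_adj e)) != 0 ->
  (perm_mx s)^T *m skew_adj e *m perm_mx s = (skew_adj e)^T ->
  (skew_adj e)^T = - skew_adj e ->
  let P : 'M[int]_n := perm_mx s in
  (~~ odd n ->
     \rank (map_mx (intr : int -> rat) (1%:M - P)) = n./2 /\
     \rank (map_mx (intr : int -> rat) (1%:M + P)) = n./2) /\
  (odd n ->
     \rank (map_mx (intr : int -> rat) (1%:M - P)) = (n - 1)./2 /\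
     \rank (map_mx (intr : int -> rat) (1%:M + P)) = (n + 1)./2) /\
  (forall p : nat, prime p -> odd p ->
    (~~ odd n ->
       \rank (map_mx (intr : int -> 'F_p) (1%:M - P)) = n./2 /\
       \rank (map_mx (intr : int -> 'F_p) (1%:M + P)) = n./2) /\
    (odd n ->
       \rank (map_mx (intr : int -> 'F_p) (1%:M - P)) = (n - 1)./2 /\
       \rank (map_mx (intr : int -> 'F_p) (1%:M + P)) = (n + 1)./2)).
Proof.
move=> _ detW_neq0 PSP skewS P; rewrite {}skewS in PSP.
set SQ := map_mx (intr : int -> rat) (skew_adj e).
have antiSQ : (perm_mx s)^T *m SQ *m perm_mx s = - SQ.
  by rewrite -(map_perm_mx intr) map_trmx -!map_mxM PSP map_mxN.
have WQ_unit : walk_mx SQ \in unitmx.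
  by rewrite map_walk_mx unitmxE det_map_mx unitfE intr_eq0.
have two_rat : (2%:R : rat) != 0 by [].
have rkQ_sub := mxrank_1_sub_perm_mx antiSQ WQ_unit two_rat.
have rkQ_add := mxrank_1_add_perm_mx antiSQ WQ_unit two_rat.
have map_1_pm (F : fieldType) :
    map_mx (intr : int -> F) (1%:M - P) = 1%:M - perm_mx s /\
    map_mx (intr : int -> F) (1%:M + P) = 1%:M + perm_mx s.
  by rewrite map_mxB map_mxD map_mx1 map_perm_mx.
have [-> ->] := map_1_pm rat.
have [evenQ oddQ] := half_uphalf_parity rkQ_sub rkQ_add.
split; [exact: evenQ | split; first exact: oddQ].
move=> p p_prime p_odd; have [-> ->] := map_1_pm 'F_p.
have [rkp_sub rkp_add] := mxrank_perm_mx_transfer (perm_involutive antiSQ WQ_unit)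
  (Fp_two_neq0 p_prime p_odd) (@intr_inj rat) rkQ_sub rkQ_add.
exact: half_uphalf_parity.
Qed.
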